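(* Let $B$ be a finite brace. Then $B$ is a one-generator brace (i.e. $B=B(x)$ for some $x\in B$) if and only if $B$ has a transitive cycle base $X$ such that $X$ is a one-generator cycle set.
   Context: A brace is a triple $(B,+,\circ)$ with $(B,+)$ an abelian group, $(B,\circ)$ a group, and $a\circ(b+c)=a\circ b-a+a\circ c$; $\lambda_a(b):=-a+a\circ b$, $a^-$ is the inverse of $a$ in $(B,\circ)$. $B$ is a cycle set via $a\cdot b:=\lambda_{a^-}(b)$. $B(x)$ is the smallest subset of $B$ containing $x$ that is a subgroup of both $(B,+)$ and $(B,\circ)$. A cycle set is a non-empty set with operation $\cdot$ such that each $y\mapsto x\cdot y$ is bijective and $(x\cdot y)\cdot(x\cdot z)=(y\cdot x)\cdot(y\cdot z)$; a sub-cycle set is a subset that is a cycle set under the restricted operation; $\langle x\rangle$ is the smallest sub-cycle set containing $x$, and a cycle set $X$ is one-generator if $X=\langle x\rangle$ for some $x\in X$. A transitive cycle base of $B$ is a subset that is a single orbit of the group generated by $\{\lambda_a:a\in B\}$ and generates $(B,+)$; it is a sub-cycle set of $B$ with the induced operation. *)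

From HB Require Import structures.
From mathcomp Require Import all_boot all_order all_algebra all_fingroup.
Set Implicit Arguments. Unset Strict Implicit. Unset Printing Implicit Defensive.
Import GRing.Theory.
Local Open Scope ring_scope.

Record brace_on (T : finZmodType) : Type := Brace {
  circ : T -> T -> T;
  cinv : T -> T;
  cone : T;
  circA : forall a b c, circ a (circ b c) = circ (circ a b) c;
  circ1l : forall a, circ cone a = a;
  circ1r : forall a, circ a cone = a;
  circVl : forall a, circ (cinv a) a = cone;
  circVr : forall a, circ a (cinv a) = cone;
  brace_ax : forall a b c, circ a (b + c) = circ a b - a + circ a c
}.

Section Brace.
Variables (T : finZmodType) (B : brace_on T).

Definition lam (a b : T) : T := - a + circ B a b.

Lemma lam_inj a : injective (lam a).
Proof.
move=> b c; rewrite /lam => /addrI H.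
by rewrite -(circ1l B b) -(circ1l B c) -(circVl B a) -!circA H.
Qed.

Definition lam_perm (a : T) : {perm T} := perm (@lam_inj a).

Definition lam_group : {set {perm T}} := <<[set lam_perm a | a in T]>>%g.

Definition cdot (a b : T) : T := lam (cinv B a) b.

Definition add_subgroup (S : {set T}) : Prop :=
  [/\ 0 \in S, (forall a b, a \in S -> b \in S -> a + b \in S)
    & (forall a, a \in S -> - a \in S)].
Definition circ_subgroup (S : {set T}) : Prop :=
  [/\ cone B \in S, (forall a b, a \in S -> b \in S -> circ B a b \in S)
    & (forall a, a \in S -> cinv B a \in S)].

(* y \in B(x), where B(x) is the smallest subset containing x that is a
   subgroup of both (B,+) and (B,o) (i.e. the intersection of all such) *)
Definition in_Bgen (x y : T) : Prop :=
  forall S : {set T}, add_subgroup S -> circ_subgroup S -> x \in S -> y \in S.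

Definition one_generator_brace : Prop := exists x : T, forall y : T, in_Bgen x y.

Definition generates_add (X : {set T}) : Prop :=
  forall y : T, forall S : {set T}, add_subgroup S -> X \subset S -> y \in S.

Definition transitive_cycle_base (X : {set T}) : Prop :=
  (exists x : T, X = orbit 'P lam_group x) /\ generates_add X.

Definition sub_cycle_set (Y : {set T}) : Prop :=
  [/\ Y != set0,
      (forall x y, x \in Y -> y \in Y -> cdot x y \in Y),
      (forall x z, x \in Y -> z \in Y -> exists! y, y \in Y /\ cdot x y = z)
    & (forall x y z, x \in Y -> y \in Y -> z \in Y ->
        cdot (cdot x y) (cdot x z) = cdot (cdot y x) (cdot y z))].

Definition in_cgen (X : {set T}) (x y : T) : Prop :=
  forall Y : {set T}, sub_cycle_set Y -> Y \subset X -> x \in Y -> y \in Y.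

Definition one_generator_cycle_set (X : {set T}) : Prop :=
  sub_cycle_set X /\ exists2 x, x \in X & forall y, y \in X <-> in_cgen X x y.

End Brace.

From Pilot Require Import Defs.
From mathcomp Require Import all_boot all_order all_algebra all_fingroup.
Set Implicit Arguments. Unset Strict Implicit. Unset Printing Implicit Defensive.
Import GRing.Theory FinRing.Theory.

(* If B = B(x0), let X be the orbit of x0 under the lambda maps.  The additive
   span of X is invariant under every lambda, hence a sub-brace containing x0,
   hence all of B; so X is a transitive cycle base.  If Y is a sub-cycle set of
   X containing x0, the lambdas of Y generate a group G that stabilises Y; the
   set of b with lambda_b in G contains the additive span of the G-orbit of x0,
   which is again a sub-brace, so G contains every lambda and Y contains X.
   Conversely, if X = <x> and S is a sub-brace containing x, then X :&: S is a
   sub-cycle set containing x, so X lies in S and S, spanning B, is B. *)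

Local Open Scope group_scope.

Lemma acts_gen_perm (aT : finType) (A : {set {perm aT}}) (S : {set aT}) :
  (forall a x, a \in A -> x \in S -> a x \in S) -> [acts <<A>>, on S | 'P].
Proof.
move=> AS; rewrite gen_subG; apply/subsetP => a Aa; rewrite !inE.
by apply/subsetP => x Sx; rewrite inE /= AS.
Qed.

Lemma acts_gen_Aut (gT : finGroupType) (G : {group {perm gT}}) (A : {set gT}) :
  G \subset Aut [set: gT] -> [acts G, on A | 'P] -> [acts G, on <<A>> | 'P].
Proof.
move=> /subsetP sGAut /subsetP nAG; apply/subsetP => a Ga.
have AutA := sGAut a Ga.
have aA x : x \in A -> a x \in A.
  by move=> Ax; rewrite -apermE (astabs_act x (nAG a Ga)).
have sAA : <<A>> \subset autm AutA @*^-1 <<A>>.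
  rewrite gen_subG; apply/subsetP => x Ax.
  by rewrite mem_morphpre ?inE //= autmE mem_gen ?aA.
rewrite !inE; apply/subsetP => x /(subsetP sAA)/morphpreP[_].
by rewrite /= autmE inE apermE.
Qed.

(* The right-translation stabiliser of [C] is a group containing [A] and,
   since [1 \in C], contained in [C]. *)
Lemma gen_sub_of_mul_closed (gT : finGroupType) (A C : {set gT}) :
  1 \in C -> (forall c a, c \in C -> a \in A -> c * a \in C) ->
  <<A>> \subset C.
Proof.
move=> C1 CA.
have sAN : A \subset 'N(C | 'R).
  apply/subsetP => a Aa; rewrite !inE; apply/subsetP => c Cc.
  by rewrite inE /= CA.
apply: subset_trans (genS sAN) _; rewrite gen_set_id ?group_set_astabs //.
by apply/subsetP => h /(astabs_act 1); rewrite /= mul1g C1.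
Qed.

Local Open Scope ring_scope.

(* [T] is a finGroupType under [+] (see finalg), so for [A : {set T}] the
   group [<<A>>] is the additive subgroup generated by [A]. *)
Section BraceTheory.
Variables (T : finZmodType) (B : brace_on T).
Implicit Types (a b c x y z : T) (S Y : {set T}).

Local Notation circ := (circ B).
Local Notation cinv := (cinv B).
Local Notation lam := (lam B).
Local Notation lam_perm := (lam_perm B).
Local Notation cdot := (cdot B).

Lemma circr0 a : circ a 0 = a.
Proof.
have := brace_ax B a 0 0; rewrite addr0 => circ0.
by apply/eqP; rewrite -subr_eq0; apply/eqP/(addIr (circ a 0)); rewrite add0r -circ0.
Qed.

Lemma coneE : cone B = 0.
Proof. by rewrite -(circ1l B 0) circr0. Qed.

Lemma lamD a b c : lam a (b + c) = lam a b + lam a c.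
Proof. by rewrite /lam brace_ax !addrA. Qed.

Lemma lamN a b : lam a (- b) = - lam a b.
Proof. by apply/eqP; rewrite -addr_eq0 -lamD addNr /lam circr0 addNr. Qed.

Lemma lam1 b : lam (cone B) b = b.
Proof. by rewrite /lam circ1l coneE oppr0 add0r. Qed.

Lemma circE a b : circ a b = a + lam a b.
Proof. by rewrite /lam addNKr. Qed.

Lemma lamM a b c : lam (circ a b) c = lam a (lam b c).
Proof.
rewrite [lam b c]/Defs.lam lamD lamN /Defs.lam circA.
by rewrite opprD opprK addrACA subrr add0r.
Qed.

Lemma lamK a b : lam a (lam (cinv a) b) = b.
Proof. by rewrite -lamM circVr lam1. Qed.

Lemma addE a b : a + b = circ a (lam (cinv a) b).
Proof. by rewrite circE lamK. Qed.

Lemma cinvE a : cinv a = - lam (cinv a) a.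
Proof. by rewrite /lam circVl coneE addr0 opprK. Qed.

Lemma cinvM a b : cinv (circ a b) = circ (cinv b) (cinv a).
Proof.
rewrite -[RHS](circ1l B) -(circVl B (circ a b)) -!circA.
by rewrite (circA B b) circVr circ1l circVr circ1r.
Qed.

Lemma cdot_cycle x y z :
  cdot (cdot x y) (cdot x z) = cdot (cdot y x) (cdot y z).
Proof. by rewrite /cdot -!lamM -!cinvM -!addE addrC. Qed.

Lemma lam_permE a : lam_perm a =1 lam a.
Proof. by move=> b; rewrite permE. Qed.

Lemma lam_permM a b : lam_perm (circ a b) = (lam_perm b * lam_perm a)%g.
Proof. by apply/permP => c; rewrite permM !lam_permE lamM. Qed.

Lemma lam_perm0 : lam_perm 0 = 1%g.
Proof. by apply/permP => c; rewrite perm1 lam_permE -coneE lam1. Qed.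

Lemma lam_permV a : lam_perm (cinv a) = (lam_perm a)^-1%g.
Proof.
by apply/eqP; rewrite eq_sym eq_invg_mul -lam_permM circVl coneE lam_perm0.
Qed.

Canonical lam_group_group := Eval hnf in [group of lam_group B].

Lemma mem_lam_group a : lam_perm a \in lam_group B.
Proof. by apply/mem_gen/imset_f. Qed.

Lemma lam_group_Aut : lam_group B \subset Aut [set: T].
Proof.
rewrite gen_subG; apply/subsetP => _ /imsetP[a _ ->].
rewrite inE; apply/andP; split; first by apply/subsetP.
by apply/morphicP => b c _ _; rewrite !lam_permE lamD.
Qed.

Lemma lam_orbit_closed x0 a x :
  x \in orbit 'P (lam_group B) x0 -> lam a x \in orbit 'P (lam_group B) x0.
Proof.
have nXG := subsetP (acts_orbit 'P x0 (subsetT (lam_group B))).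
by move=> Xx; rewrite -lam_permE -apermE (astabs_act _ (nXG _ (mem_lam_group a))).
Qed.

Lemma add_subgroup_group (G : {group T}) : add_subgroup G.
Proof.
split=> [|a b|a]; rewrite -?zmod1gE -?zmodMgE -?zmodVgE;
  [exact: group1 | exact: groupM | exact: groupVr].
Qed.

Lemma circ_subgroup_of_acts (G : {group {perm T}}) (S : {group T}) :
  [acts G, on S | 'P] -> {in S, forall a, lam_perm a \in G} ->
  circ_subgroup B S.
Proof.
move=> /subsetP nSG lamG; have [S0 SD SN] := add_subgroup_group S.
have lamS a b : lam_perm a \in G -> b \in S -> lam a b \in S.
  by move=> Ga Sb; rewrite -lam_permE -apermE (astabs_act _ (nSG _ Ga)).
split=> [|a b Sa Sb|a Sa]; first by rewrite coneE.
  by rewrite circE SD ?lamS ?lamG.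
by rewrite cinvE SN ?lamS // lam_permV groupV lamG.
Qed.

Lemma cdot_circ_subgroup S a b :
  add_subgroup S -> circ_subgroup B S -> a \in S -> b \in S -> cdot a b \in S.
Proof.
move=> [_ SD SN] [_ SM SV] Sa Sb; rewrite /cdot /lam.
by apply: SD; [apply/SN/SV | apply/SM/Sb/SV].
Qed.

Lemma sub_cycle_set_of_closed Y :
  Y != set0 -> (forall x y, x \in Y -> y \in Y -> cdot x y \in Y) ->
  sub_cycle_set B Y.
Proof.
move=> Y0 cdotY; split=> // [x z Yx Yz|x y z _ _ _]; last exact: cdot_cycle.
have nYx : lam_perm (cinv x) \in 'N(Y | 'P).
  by rewrite !inE; apply/subsetP => y Yy; rewrite inE /= apermE lam_permE cdotY.
pose y := ((lam_perm (cinv x))^-1 z)%g.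
have xy : cdot x y = z by rewrite /cdot -lam_permE permKV.
exists y; split=> [|y' [_ xy']].
  by rewrite -(astabs_act y nYx) /= apermE permKV.
exact: (@lam_inj _ B (cinv x)) (etrans xy (esym xy')).
Qed.

Lemma sub_cycle_set_lam_closed Y a z :
  sub_cycle_set B Y -> a \in Y -> z \in Y -> lam a z \in Y.
Proof.
by case=> _ _ cdotY _ Ya Yz; have [w [[Yw <-] _]] := cdotY a z Ya Yz; rewrite lamK.
Qed.

Lemma orbit_sub_cycle_set x0 : sub_cycle_set B (orbit 'P (lam_group B) x0).
Proof.
apply: sub_cycle_set_of_closed => [|x y _]; last exact: lam_orbit_closed.
by apply/set0Pn; exists x0; exact: orbit_refl.
Qed.

Lemma orbit_subbrace_sub_cycle_set x0 S x :
  add_subgroup S -> circ_subgroup B S ->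
  x \in orbit 'P (lam_group B) x0 :&: S ->
  sub_cycle_set B (orbit 'P (lam_group B) x0 :&: S).
Proof.
move=> Sadd Scirc XSx.
apply: sub_cycle_set_of_closed => [|a b /setIP[_ Sa] /setIP[Xb Sb]].
  by apply/set0Pn; exists x.
apply/setIP; split; first exact: lam_orbit_closed.
exact: cdot_circ_subgroup.
Qed.

Section OneGeneratorBrace.
Variable x0 : T.
Hypothesis genB : forall y, in_Bgen B x0 y.

Lemma mem_lam_stable_subgroup (G : {group {perm T}}) (S : {group T}) y :
  x0 \in S -> [acts G, on S | 'P] -> {in S, forall a, lam_perm a \in G} ->
  y \in S.
Proof.
move=> Sx0 nSG lamG; apply: genB Sx0; first exact: add_subgroup_group.
exact: circ_subgroup_of_acts nSG lamG.
Qed.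

Lemma orbit_generates_add : generates_add (orbit 'P (lam_group B) x0).
Proof.
move=> y S [S0 SD _] XS.
have sXS : <<orbit 'P (lam_group B) x0>> \subset S.
  by apply: gen_sub_of_mul_closed => // c a Sc /(subsetP XS); apply: SD.
apply: (subsetP sXS); apply: (mem_lam_stable_subgroup (G := lam_group B)).
- exact/mem_gen/orbit_refl.
- exact/acts_gen_Aut/acts_orbit/subsetT/lam_group_Aut.
- by move=> a _; apply: mem_lam_group.
Qed.

Lemma lam_group_acts_sub_cycle_set Y :
  sub_cycle_set B Y -> x0 \in Y -> [acts lam_group B, on Y | 'P].
Proof.
move=> cycY Yx0.
pose GY := <<[set lam_perm a | a in Y]>>%G.
have nYGY : [acts GY, on Y | 'P].
  apply: acts_gen_perm => _ x /imsetP[a Ya ->] Yx.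
  by rewrite lam_permE sub_cycle_set_lam_closed.
pose C := [set b | lam_perm b \in GY].
have sYC : <<Y>> \subset C.
  apply: gen_sub_of_mul_closed => [|c y]; first by rewrite inE lam_perm0 group1.
  rewrite !inE zmodMgE addE lam_permM => GYc Yy; rewrite groupM //.
  apply/mem_gen/imset_f; rewrite -lam_permE lam_permV -apermE.
  by rewrite (astabs_act _ (subsetP nYGY _ _)) ?groupV.
have lamGY b : lam_perm b \in GY.
  have GY_Aut : GY \subset Aut [set: T].
    apply: subset_trans lam_group_Aut; rewrite gen_subG.
    by apply/subsetP => _ /imsetP[a _ ->]; exact: mem_lam_group.
  have sOC : <<orbit 'P GY x0>> \subset C.
    by apply: subset_trans sYC; rewrite genS // acts_sub_orbit.
  suff : b \in C by rewrite inE.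
  apply: (subsetP sOC); apply: (mem_lam_stable_subgroup (G := GY)).
  - exact/mem_gen/orbit_refl.
  - exact/acts_gen_Aut/acts_orbit/subsetT.
  - by move=> a /(subsetP sOC); rewrite inE.
apply: subset_trans nYGY; rewrite gen_subG; apply/subsetP => _ /imsetP[b _ ->].
exact: lamGY.
Qed.

End OneGeneratorBrace.

End BraceTheory.

Theorem mainTheorem8 (T : finZmodType) (B : brace_on T) :
  one_generator_brace B <->
  exists X : {set T}, transitive_cycle_base B X /\ one_generator_cycle_set B X.
Proof.
split=> [[x0 genB] | [X [[[x0 ->] genX] [_ [x Xx genx]]]]].
  exists (orbit 'P (lam_group B) x0).
  split; first by split; [exists x0 | exact: orbit_generates_add].
  split; first exact: orbit_sub_cycle_set.
  exists x0; first exact: orbit_refl.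
  move=> y; split=> [Xy Y cycY _ Yx0 | ]; last first.
    by apply; [exact: orbit_sub_cycle_set | exact: subxx | exact: orbit_refl].
  apply: subsetP Xy.
  by rewrite acts_sub_orbit // (lam_group_acts_sub_cycle_set genB).
exists x => y S Sadd Scirc Sx.
suff sXS : orbit 'P (lam_group B) x0 \subset S by exact: genX Sadd sXS.
have XSx : x \in orbit 'P (lam_group B) x0 :&: S by rewrite inE Xx.
have cycXS := orbit_subbrace_sub_cycle_set Sadd Scirc XSx.
by apply/subsetP => z /genx/(_ _ cycXS (subsetIl _ _) XSx)/setIP[].
Qed.
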